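(* Let all notions be as in the context. If $(\Gamma,\mathsf{eval}\ e,[\,])\Longrightarrow^{*}(\Delta,\mathsf{eval}\ w,[\,])$, where $w$ is a weak head normal form, then $\Gamma;\emptyset;e\Downarrow\Delta;w$.
   Context: The language $\lambda_{\mathrm{PMC}}$ (in normalized form). Expressions: $e ::= x \mid e\,y \mid \lambda m \mid c(y_1,\ldots,y_n)$, where $x,y,y_i$ are variables, $c$ ranges over constructors, and application arguments and constructor arguments are variables. Matchings: $m ::= \mathsf{ret}(e) \mid \mathsf{fail} \mid p \Rightarrow m \mid y \triangleright m \mid m_1 \mid m_2 \mid (m\ \mathsf{where}\ \{x_1=e_1;\ldots;x_n=e_n\})$ (return expression, failure, pattern match, argument supply, alternative, local possibly recursive bindings). Patterns: $p ::= x \mid c(p_1,\ldots,p_n)$ (patterns may be nested). The matching $y_1 \triangleright p_1 \Rightarrow \cdots \Rightarrow y_n \triangleright p_n \Rightarrow m$ associates to the right: $y_1 \triangleright (p_1 \Rightarrow (y_2 \triangleright (\cdots (p_n \Rightarrow m)\cdots)))$. $m[y/x]$ denotes capture-avoiding substitution of $y$ for free occurrences of $x$. Arity: $\mathrm{ar}(\mathsf{ret}(e))=0$, $\mathrm{ar}(\mathsf{fail})=0$, $\mathrm{ar}(p\Rightarrow m)=1+\mathrm{ar}(m)$, $\mathrm{ar}(y\triangleright m)=\max(0,\mathrm{ar}(m)-1)$, $\mathrm{ar}(m_1\mid m_2)=\mathrm{ar}(m_1)$ if $\mathrm{ar}(m_1)=\mathrm{ar}(m_2)$ (undefined otherwise),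 $\mathrm{ar}(m\ \mathsf{where}\ b)=\mathrm{ar}(m)$. Weak head normal forms: $w ::= \lambda m$ with $\mathrm{ar}(m)>0$, or $c(y_1,\ldots,y_n)$. Matching results: $r ::= \mathsf{ret}(e) \mid \mathsf{fail}$. A heap $\Gamma,\Delta,\Theta$ is a finite map from variables to expressions; $\Gamma[y\mapsto e]$ maps $y$ to $e$ and otherwise agrees with $\Gamma$. An argument stack $A$ is a list of variables; for such a list define $[\,]\triangleright e = e$ and $(y:ys)\triangleright e = ys \triangleright (e\,y)$. $L$ is a set of variables. Big-step semantics: two mutually inductive judgments $\Gamma;L;e \Downarrow \Delta;w$ and $\Gamma;L;A;m \Downarrow_M \Delta;r$ defined by the rules: (Whnf) $\Gamma;L;w \Downarrow \Gamma;w$. (Sat) if $\mathrm{ar}(m)=0$, $\Gamma;L;[\,];m \Downarrow_M \Delta;\mathsf{ret}(e)$ and $\Delta;L;e\Downarrow\Theta;w$, then $\Gamma;L;\lambda m \Downarrow \Theta;w$. (Var) if $\Gamma;L\cup\{y\};e \Downarrow \Delta;w$ then $\Gamma[y\mapsto e];L;y \Downarrow \Delta[y\mapsto w];w$. (App) if $\Gamma;L;e\Downarrow\Delta;\lambda m$ and $\Delta;L;\lambda(y\triangleright m)\Downarrow\Theta;w$ then $\Gamma;L;(e\,y)\Downarrow\Theta;w$. (Return) $\Gamma;L;A;\mathsf{ret}(e)\Downarrow_M\Gamma;\mathsf{ret}(A\triangleright e)$. (Fail) $\Gamma;L;A;\mathsf{fail}\Downarrow_M\Gamma;\mathsf{fail}$.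 (Arg) if $\Gamma;L;(y:A);m\Downarrow_M\Delta;r$ then $\Gamma;L;A;y\triangleright m\Downarrow_M\Delta;r$. (Bind) if $\Gamma;L;A;m[y/x]\Downarrow_M\Delta;r$ then $\Gamma;L;(y:A);x\Rightarrow m\Downarrow_M\Delta;r$. (Cons1) if $\Gamma;L;y\Downarrow\Delta;c(y_1,\ldots,y_n)$ and $\Delta;L;A;y_1\triangleright p_1\Rightarrow\cdots\Rightarrow y_n\triangleright p_n\Rightarrow m\Downarrow_M\Theta;r$ then $\Gamma;L;(y:A);c(p_1,\ldots,p_n)\Rightarrow m\Downarrow_M\Theta;r$. (Cons2) if $\Gamma;L;y\Downarrow\Delta;c'(y_1,\ldots,y_k)$ with $c\neq c'$ then $\Gamma;L;(y:A);c(p_1,\ldots,p_n)\Rightarrow m\Downarrow_M\Delta;\mathsf{fail}$. (Alt1) if $\Gamma;L;A;m_1\Downarrow_M\Delta;\mathsf{ret}(e)$ then $\Gamma;L;A;(m_1\mid m_2)\Downarrow_M\Delta;\mathsf{ret}(e)$. (Alt2) if $\Gamma;L;A;m_1\Downarrow_M\Delta;\mathsf{fail}$ and $\Delta;L;A;m_2\Downarrow_M\Theta;r$ then $\Gamma;L;A;(m_1\mid m_2)\Downarrow_M\Theta;r$. (Where) if $\Gamma[y_i\mapsto\hat e_i];L;A;\hat m\Downarrow_M\Delta;r$ then $\Gamma;L;A;(m\ \mathsf{where}\ \{x_i=e_i\})\Downarrow_M\Delta;r$, where the $y_i$ are fresh (occur neither free nor bound in $\Gamma$, $L$, $A$, or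 $m$), $\hat e_i=e_i[y_1/x_1,\ldots,y_n/x_n]$ and $\hat m=m[y_1/x_1,\ldots,y_n/x_n]$. Abstract machine. Controls: $C ::= \mathsf{eval}\ e \mid \mathsf{match}\ A\ m$. Continuations: $k ::= y \mid\ !y \mid \$ \mid ?(A,m) \mid @(A, c(\vec p)\Rightarrow m)$. A return stack $S$ is a list of continuations. Configurations are triples $(\Gamma, C, S)$. Transitions $\Longrightarrow$: (App1) $(\Gamma,\mathsf{eval}\ (e\,y),S)\Longrightarrow(\Gamma,\mathsf{eval}\ e,y:S)$. (App2) $(\Gamma,\mathsf{eval}\ \lambda m,y:S)\Longrightarrow(\Gamma,\mathsf{eval}\ \lambda(y\triangleright m),S)$ if $\mathrm{ar}(m)>0$. (Sat) $(\Gamma,\mathsf{eval}\ \lambda m,S)\Longrightarrow(\Gamma,\mathsf{match}\ [\,]\ m,\$:S)$ if $\mathrm{ar}(m)=0$. (Var) $(\Gamma[y\mapsto e],\mathsf{eval}\ y,S)\Longrightarrow(\Gamma,\mathsf{eval}\ e,!y:S)$. (Update) $(\Gamma,\mathsf{eval}\ w,!y:S)\Longrightarrow(\Gamma[y\mapsto w],\mathsf{eval}\ w,S)$. (Return1A) $(\Gamma,\mathsf{match}\ A\ \mathsf{ret}(e),S)\Longrightarrow(\Gamma,\mathsf{match}\ [\,]\ \mathsf{ret}(A\triangleright e),S)$ if $A\neq[\,]$. (Return1B) $(\Gamma,\mathsf{match}\ [\,]\ \mathsf{ret}(e),\$:S)\Longrightarrow(\Gamma,\mathsf{eval}\ e,S)$.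 (Return2) $(\Gamma,\mathsf{match}\ [\,]\ \mathsf{ret}(e),?(A',m):S)\Longrightarrow(\Gamma,\mathsf{match}\ [\,]\ \mathsf{ret}(e),S)$. (Bind) $(\Gamma,\mathsf{match}\ (y:A)\ (x\Rightarrow m),S)\Longrightarrow(\Gamma,\mathsf{match}\ A\ m[y/x],S)$. (Cons1) $(\Gamma,\mathsf{match}\ (y:A)\ (c(\vec p)\Rightarrow m),S)\Longrightarrow(\Gamma,\mathsf{eval}\ y,@(A,c(\vec p)\Rightarrow m):S)$. (Cons2) $(\Gamma,\mathsf{eval}\ c(y_1,\ldots,y_n),@(A,c(p_1,\ldots,p_n)\Rightarrow m):S)\Longrightarrow(\Gamma,\mathsf{match}\ A\ (y_1\triangleright p_1\Rightarrow\cdots\Rightarrow y_n\triangleright p_n\Rightarrow m),S)$. (Fail) $(\Gamma,\mathsf{eval}\ c'(y_1,\ldots,y_k),@(A,c(p_1,\ldots,p_n)\Rightarrow m):S)\Longrightarrow(\Gamma,\mathsf{match}\ [\,]\ \mathsf{fail},S)$ if $c\neq c'$. (Arg) $(\Gamma,\mathsf{match}\ A\ (y\triangleright m),S)\Longrightarrow(\Gamma,\mathsf{match}\ (y:A)\ m,S)$. (Alt1) $(\Gamma,\mathsf{match}\ A\ (m_1\mid m_2),S)\Longrightarrow(\Gamma,\mathsf{match}\ A\ m_1,?(A,m_2):S)$. (Alt2) $(\Gamma,\mathsf{match}\ A'\ \mathsf{fail},?(A,m):S)\Longrightarrow(\Gamma,\mathsf{match}\ A\ m,S)$. (Where) $(\Gamma,\mathsf{match}\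 A\ (m\ \mathsf{where}\ \{x_i=e_i\}),S)\Longrightarrow(\Gamma[y_i\mapsto\hat e_i],\mathsf{match}\ A\ \hat m,S)$ with $y_i$ fresh, $\hat e_i=e_i[y_1/x_1,\ldots,y_n/x_n]$, $\hat m=m[y_1/x_1,\ldots,y_n/x_n]$. $\Longrightarrow^{*}$ is the reflexive–transitive closure of $\Longrightarrow$. *)

From Stdlib Require Import List Arith Bool.
Import ListNotations.

Definition atom := nat.
Definition con := nat.

(** A variable occurrence: either a bound variable (de Bruijn index) or a
    free name.  Binders are the pattern variables of [p => m] and the
    variables [x_1..x_n] of [m where {x_i = e_i}]. *)
Inductive vr : Type :=
| BV (i : nat)
| FV (x : atom).

Inductive pat : Type :=
| PVar
| PCon (c : con) (ps : list pat).

(** Expressions and matchings.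
    [EVar x] = x, [EApp e y] = e y, [ELam m] = \lambda m, [ECon c ys] = c(ys);
    [MRet e] = ret(e), [MFail] = fail, [MPat p m] = p => m, [MArg y m] = y |> m,
    [MAlt m1 m2] = m1 | m2, [MWhere m es] = m where {x_1 = e_1; ...; x_n = e_n}. *)
Inductive expr : Type :=
| EVar (v : vr)
| EApp (e : expr) (v : vr)
| ELam (m : mtch)
| ECon (c : con) (vs : list vr)
with mtch : Type :=
| MRet (e : expr)
| MFail
| MPat (p : pat) (m : mtch)
| MArg (v : vr) (m : mtch)
| MAlt (m1 m2 : mtch)
| MWhere (m : mtch) (es : list expr).

(** Convention: in [MPat p m], the
    pattern variables of [p] (listed left to right v_1..v_K) are referred to in
    [m] by the indices K-1, ..., 0 (the last one is index 0); with this
    convention [c(p_1..p_n) => m] and [p_1 => ... => p_n => m] bind the same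
    indices in [m].  In [MWhere m es], x_j (j = 0..n-1) is index j in the
    [es] and in [m]. *)
Fixpoint pat_nv (p : pat) : nat :=
  match p with
  | PVar => 1
  | PCon _ ps => list_sum (map pat_nv ps)
  end.

Definition open_vr (k : nat) (us : list vr) (v : vr) : vr :=
  match v with
  | BV i => if (k <=? i) && (i <? k + length us) then nth (i - k) us v else v
  | FV _ => v
  end.

Fixpoint open_e (k : nat) (us : list vr) (e : expr) {struct e} : expr :=
  match e with
  | EVar v => EVar (open_vr k us v)
  | EApp e' v => EApp (open_e k us e') (open_vr k us v)
  | ELam m => ELam (open_m k us m)
  | ECon c vs => ECon c (map (open_vr k us) vs)
  end
with open_m (k : nat) (us : list vr) (m : mtch) {struct m} : mtch :=
  match m with
  | MRet e => MRet (open_e k us e)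
  | MFail => MFail
  | MPat p m' => MPat p (open_m (k + pat_nv p) us m')
  | MArg v m' => MArg (open_vr k us v) (open_m k us m')
  | MAlt m1 m2 => MAlt (open_m k us m1) (open_m k us m2)
  | MWhere m' es =>
      MWhere (open_m (k + length es) us m') (map (open_e (k + length es) us) es)
  end.

Definition fv_vr (v : vr) : list atom :=
  match v with BV _ => [] | FV x => [x] end.

Fixpoint fv_e (e : expr) : list atom :=
  match e with
  | EVar v => fv_vr v
  | EApp e' v => fv_e e' ++ fv_vr v
  | ELam m => fv_m m
  | ECon _ vs => flat_map fv_vr vs
  end
with fv_m (m : mtch) : list atom :=
  match m with
  | MRet e => fv_e e
  | MFail => []
  | MPat _ m' => fv_m m'
  | MArg v m' => fv_vr v ++ fv_m m'
  | MAlt m1 m2 => fv_m m1 ++ fv_m m2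
  | MWhere m' es => fv_m m' ++ flat_map fv_e es
  end.

Definition fv_args (A : list vr) : list atom := flat_map fv_vr A.

Fixpoint ar (m : mtch) : option nat :=
  match m with
  | MRet _ => Some 0
  | MFail => Some 0
  | MPat _ m' => option_map S (ar m')
  | MArg _ m' => option_map pred (ar m')   (* max(0, ar m' - 1) *)
  | MAlt m1 m2 =>
      match ar m1, ar m2 with
      | Some a, Some b => if a =? b then Some a else None
      | _, _ => None
      end
  | MWhere m' _ => ar m'
  end.

Definition whnf (e : expr) : Prop :=
  match e with
  | ELam m => exists k, ar m = Some (S k)
  | ECon _ _ => True
  | _ => False
  end.

Inductive mres : Type :=
| RRet (e : expr)
| RFail.

Definition app_args (A : list vr) (e : expr) : expr := fold_left EApp A e.

Fixpoint chain (ys : list vr) (ps : list pat) (m : mtch) : mtch :=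
  match ys, ps with
  | y :: ys', p :: ps' => MArg y (MPat p (chain ys' ps' m))
  | _, _ => m
  end.

(** Heaps: maps from names to expressions (finite domain assumed where needed). *)
Definition heap := atom -> option expr.

Definition heap_finite (H : heap) : Prop :=
  exists l : list atom, forall x, H x <> None -> In x l.

Definition upd (H : heap) (y : atom) (e : expr) : heap :=
  fun z => if z =? y then Some e else H z.

(** Heap without the binding for y (so that Gamma[y |-> e] decomposes as
    [rem Gamma y] extended with y |-> e). *)
Definition rem (H : heap) (y : atom) : heap :=
  fun z => if z =? y then None else H z.

Fixpoint upds (H : heap) (ys : list atom) (es : list expr) : heap :=
  match ys, es with
  | y :: ys', e :: es' => upd (upds H ys' es') y e
  | _, _ => H
  end.

Definition heap_occ (H : heap) (y : atom) : Prop :=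
  H y <> None \/ exists z e, H z = Some e /\ In y (fv_e e).

Definition fresh_big (G : heap) (L : list atom) (A : list vr) (m : mtch) (y : atom) : Prop :=
  ~ heap_occ G y /\ ~ In y L /\ ~ In y (fv_args A) /\ ~ In y (fv_m m).

Inductive beval : heap -> list atom -> expr -> heap -> expr -> Prop :=
| B_Whnf G L w :
    whnf w -> beval G L w G w
| B_Sat G L m D e T w :
    ar m = Some 0 ->
    bmatch G L [] m D (RRet e) ->
    beval D L e T w ->
    beval G L (ELam m) T w
| B_Var G L y e D w :
    G y = Some e ->
    beval (rem G y) (y :: L) e D w ->
    beval G L (EVar (FV y)) (upd D y w) w
| B_App G L e y D m T w :
    beval G L e D (ELam m) ->
    beval D L (ELam (MArg y m)) T w ->
    beval G L (EApp e y) T w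
with bmatch : heap -> list atom -> list vr -> mtch -> heap -> mres -> Prop :=
| BM_Return G L A e :
    bmatch G L A (MRet e) G (RRet (app_args A e))
| BM_Fail G L A :
    bmatch G L A MFail G RFail
| BM_Arg G L A y m D r :
    bmatch G L (y :: A) m D r ->
    bmatch G L A (MArg y m) D r
| BM_Bind G L A y m D r :
    bmatch G L A (open_m 0 [y] m) D r ->
    bmatch G L (y :: A) (MPat PVar m) D r
| BM_Cons1 G L A y c ps m D ys T r :
    beval G L (EVar y) D (ECon c ys) ->
    length ys = length ps ->
    bmatch D L A (chain ys ps m) T r ->
    bmatch G L (y :: A) (MPat (PCon c ps) m) T r
| BM_Cons2 G L A y c ps m D c' ys :
    beval G L (EVar y) D (ECon c' ys) ->
    c <> c' ->
    bmatch G L (y :: A) (MPat (PCon c ps) m) D RFail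
| BM_Alt1 G L A m1 m2 D e :
    bmatch G L A m1 D (RRet e) ->
    bmatch G L A (MAlt m1 m2) D (RRet e)
| BM_Alt2 G L A m1 m2 D T r :
    bmatch G L A m1 D RFail ->
    bmatch D L A m2 T r ->
    bmatch G L A (MAlt m1 m2) T r
| BM_Where G L A m es ys D r :
    length ys = length es ->
    NoDup ys ->
    (forall y, In y ys -> fresh_big G L A (MWhere m es) y) ->
    bmatch (upds G ys (map (open_e 0 (map FV ys)) es)) L A
           (open_m 0 (map FV ys) m) D r ->
    bmatch G L A (MWhere m es) D r.

Inductive ctrl : Type :=
| CEval (e : expr)
| CMatch (A : list vr) (m : mtch).

Inductive cont : Type :=
| KArg (y : vr)
| KUpd (y : atom)
| KRet
| KAlt (A : list vr) (m : mtch)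
| KCon (A : list vr) (c : con) (ps : list pat) (m : mtch).

Definition config : Type := (heap * ctrl * list cont)%type.

Definition fv_ctrl (C : ctrl) : list atom :=
  match C with
  | CEval e => fv_e e
  | CMatch A m => fv_args A ++ fv_m m
  end.

Definition fv_cont (k : cont) : list atom :=
  match k with
  | KArg y => fv_vr y
  | KUpd y => [y]
  | KRet => []
  | KAlt A m => fv_args A ++ fv_m m
  | KCon A _ _ m => fv_args A ++ fv_m m
  end.

Definition fresh_cfg (G : heap) (C : ctrl) (st : list cont) (y : atom) : Prop :=
  ~ heap_occ G y /\ ~ In y (fv_ctrl C) /\ ~ In y (flat_map fv_cont st).

Inductive step : config -> config -> Prop :=
| S_App1 G e y st :
    step (G, CEval (EApp e y), st) (G, CEval e, KArg y :: st)
| S_App2 G m y st k :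
    ar m = Some (S k) ->
    step (G, CEval (ELam m), KArg y :: st) (G, CEval (ELam (MArg y m)), st)
| S_Sat G m st :
    ar m = Some 0 ->
    step (G, CEval (ELam m), st) (G, CMatch [] m, KRet :: st)
| S_Var G y e st :
    G y = Some e ->
    step (G, CEval (EVar (FV y)), st) (rem G y, CEval e, KUpd y :: st)
| S_Update G w y st :
    whnf w ->
    step (G, CEval w, KUpd y :: st) (upd G y w, CEval w, st)
| S_Return1A G A e st :
    A <> [] ->
    step (G, CMatch A (MRet e), st) (G, CMatch [] (MRet (app_args A e)), st)
| S_Return1B G e st :
    step (G, CMatch [] (MRet e), KRet :: st) (G, CEval e, st)
| S_Return2 G e A' m st :
    step (G, CMatch [] (MRet e), KAlt A' m :: st) (G, CMatch [] (MRet e), st)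
| S_Bind G y A m st :
    step (G, CMatch (y :: A) (MPat PVar m), st) (G, CMatch A (open_m 0 [y] m), st)
| S_Cons1 G y A c ps m st :
    step (G, CMatch (y :: A) (MPat (PCon c ps) m), st)
         (G, CEval (EVar y), KCon A c ps m :: st)
| S_Cons2 G c ys A ps m st :
    length ys = length ps ->
    step (G, CEval (ECon c ys), KCon A c ps m :: st) (G, CMatch A (chain ys ps m), st)
| S_Fail G c' ys A c ps m st :
    c <> c' ->
    step (G, CEval (ECon c' ys), KCon A c ps m :: st) (G, CMatch [] MFail, st)
| S_Arg G A y m st :
    step (G, CMatch A (MArg y m), st) (G, CMatch (y :: A) m, st)
| S_Alt1 G A m1 m2 st :
    step (G, CMatch A (MAlt m1 m2), st) (G, CMatch A m1, KAlt A m2 :: st)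
| S_Alt2 G A' A m st :
    step (G, CMatch A' MFail, KAlt A m :: st) (G, CMatch A m, st)
| S_Where G A m es ys st :
    length ys = length es ->
    NoDup ys ->
    (forall y, In y ys -> fresh_cfg G (CMatch A (MWhere m es)) st y) ->
    step (G, CMatch A (MWhere m es), st)
         (upds G ys (map (open_e 0 (map FV ys)) es), CMatch A (open_m 0 (map FV ys) m), st).

Inductive steps : config -> config -> Prop :=
| steps_refl c : steps c c
| steps_step c1 c2 c3 : step c1 c2 -> steps c2 c3 -> steps c1 c3.

(* A machine run is read backwards as a big-step derivation.  A return
   stack denotes the remainder of a derivation: an argument frame y finishes
   an (App) step, an update frame !y a (Var) step, $ a (Sat) step, ?(A, m) an
   (Alt) step and @(A, c(ps) => m) a (Cons) step, while the names of the
   pending update frames form the set L of the big-step judgement.  The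
   invariant "the control has a big-step derivation whose result the stack
   carries to (D, w)" holds trivially for the final configuration, is
   preserved backwards by every machine step, and for the initial
   configuration, with its empty stack, is the claim. *)
From Stdlib Require Import List.
Import ListNotations.

Fixpoint upd_names (st : list cont) : list atom :=
  match st with
  | [] => []
  | KUpd y :: st' => y :: upd_names st'
  | _ :: st' => upd_names st'
  end.

Fixpoint kont_val (Df : heap) (wf : expr) (st : list cont) (D : heap) (w : expr)
  {struct st} : Prop :=
  match st with
  | [] => D = Df /\ w = wf
  | KArg y :: st' => exists m, w = ELam m /\ exists D2 w2,
        beval D (upd_names st') (ELam (MArg y m)) D2 w2 /\ kont_val Df wf st' D2 w2
  | KUpd y :: st' => kont_val Df wf st' (upd D y w) w
  | KRet :: _ | KAlt _ _ :: _ => False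
  | KCon A c ps m :: st' => exists c' ys, w = ECon c' ys /\
        ((c = c' /\ length ys = length ps /\ exists T r,
            bmatch D (upd_names st') A (chain ys ps m) T r /\ kont_res Df wf st' T r)
         \/ (c <> c' /\ kont_res Df wf st' D RFail))
  end
with kont_res (Df : heap) (wf : expr) (st : list cont) (D : heap) (r : mres)
  {struct st} : Prop :=
  match st with
  | KRet :: st' => exists e, r = RRet e /\ exists D2 w2,
        beval D (upd_names st') e D2 w2 /\ kont_val Df wf st' D2 w2
  | KAlt A m :: st' =>
      match r with
      | RRet _ => kont_res Df wf st' D r
      | RFail => exists T r', bmatch D (upd_names st') A m T r' /\ kont_res Df wf st' T r'
      end
  | _ => False
  end.

Definition cfg_reaches (Df : heap) (wf : expr) (c : config) : Prop :=
  match c with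
  | (G, CEval e, st) => exists D w, beval G (upd_names st) e D w /\ kont_val Df wf st D w
  | (G, CMatch A m, st) => exists T r, bmatch G (upd_names st) A m T r /\ kont_res Df wf st T r
  end.

Lemma beval_whnf_inv G L w D w' : whnf w -> beval G L w D w' -> D = G /\ w' = w.
Proof.
  intros Hw Hb; inversion Hb; subst; auto; simpl in Hw; try contradiction.
  destruct Hw as [k Hk]; congruence.
Qed.

Lemma upd_names_fv st y : In y (upd_names st) -> In y (flat_map fv_cont st).
Proof.
  induction st as [|k st IH]; simpl; [easy|].
  destruct k; simpl; intros Hy; try (apply in_or_app; right); auto.
  destruct Hy; auto.
Qed.

Lemma fresh_cfg_big G A m st y :
  fresh_cfg G (CMatch A m) st y -> fresh_big G (upd_names st) A m y.
Proof.
  intros [HG [HC Hst]]; simpl in HC.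
  repeat split; auto.
  - intros Hy; apply Hst, upd_names_fv, Hy.
  - intros Hy; apply HC, in_or_app; left; exact Hy.
  - intros Hy; apply HC, in_or_app; right; exact Hy.
Qed.

Section Reaches.

Variables (Df : heap) (wf : expr).

Lemma cfg_reaches_whnf G w st :
  whnf w -> kont_val Df wf st G w -> cfg_reaches Df wf (G, CEval w, st).
Proof. intros Hw Hk; exists G, w; split; [constructor|]; assumption. Qed.

Lemma cfg_reaches_whnf_inv G w st :
  whnf w -> cfg_reaches Df wf (G, CEval w, st) -> kont_val Df wf st G w.
Proof.
  intros Hw [D [w' [Hb Hk]]].
  destruct (beval_whnf_inv _ _ _ _ _ Hw Hb) as [-> ->]; exact Hk.
Qed.

Lemma cfg_reaches_ret G A e st :
  kont_res Df wf st G (RRet (app_args A e)) -> cfg_reaches Df wf (G, CMatch A (MRet e), st).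
Proof. intros Hk; exists G, (RRet (app_args A e)); split; [constructor | exact Hk]. Qed.

Lemma cfg_reaches_ret_inv G A e st :
  cfg_reaches Df wf (G, CMatch A (MRet e), st) -> kont_res Df wf st G (RRet (app_args A e)).
Proof. intros [T [r [Hb Hk]]]; inversion Hb; subst; exact Hk. Qed.

Lemma cfg_reaches_fail G A st :
  kont_res Df wf st G RFail -> cfg_reaches Df wf (G, CMatch A MFail, st).
Proof. intros Hk; exists G, RFail; split; [constructor | exact Hk]. Qed.

Lemma cfg_reaches_fail_inv G A st :
  cfg_reaches Df wf (G, CMatch A MFail, st) -> kont_res Df wf st G RFail.
Proof. intros [T [r [Hb Hk]]]; inversion Hb; subst; exact Hk. Qed.

Lemma step_cfg_reaches c1 c2 :
  step c1 c2 -> cfg_reaches Df wf c2 -> cfg_reaches Df wf c1.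
Proof.
  intros Hs.
  destruct Hs as [| | | | ? ? ? ? Hw | | | | | | | | | | | ? ? ? ? ? ? ? ? Hfresh].
  - intros [D [w [Hb [m [-> [D2 [w2 [Hb2 Hk2]]]]]]]].
    exists D2, w2; split; [econstructor; eauto | exact Hk2].
  - intros HG; apply cfg_reaches_whnf; [simpl; eauto|].
    exists m; split; [reflexivity | exact HG].
  - intros [T [r [Hb [e [-> [D2 [w2 [Hb2 Hk2]]]]]]]].
    exists D2, w2; split; [econstructor; eauto | exact Hk2].
  - intros [D [w [Hb Hk]]].
    exists (upd D y w), w; split; [econstructor; eauto | exact Hk].
  - intros HG; apply cfg_reaches_whnf; [assumption|].
    exact (cfg_reaches_whnf_inv _ _ _ Hw HG).
  - intros HG; apply cfg_reaches_ret; exact (cfg_reaches_ret_inv _ [] _ _ HG).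
  - intros HG; apply (cfg_reaches_ret _ []); simpl; eauto.
  - intros HG; apply (cfg_reaches_ret _ []); exact (cfg_reaches_ret_inv _ [] _ _ HG).
  - intros [T [r [Hb Hk]]]; exists T, r; split; [constructor | ]; assumption.
  - intros [D [w [Hb [c' [ys [-> Hk]]]]]].
    destruct Hk as [[<- [Hl [T [r [Hb2 Hk2]]]]] | [Hne Hk2]].
    + exists T, r; split; [econstructor; eauto | exact Hk2].
    + exists D, RFail; split; [eapply BM_Cons2; eauto | exact Hk2].
  - intros HG; apply cfg_reaches_whnf; [exact I|].
    exists c, ys; split; [reflexivity | left; eauto].
  - intros HG; apply cfg_reaches_whnf; [exact I|].
    exists c', ys; split; [reflexivity | right; split; [assumption|]].
    exact (cfg_reaches_fail_inv _ _ _ HG).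
  - intros [T [r [Hb Hk]]]; exists T, r; split; [constructor | ]; assumption.
  - intros [T [[e|] [Hb Hk]]].
    + exists T, (RRet e); split; [constructor | ]; assumption.
    + destruct Hk as [T2 [r2 [Hb2 Hk2]]].
      exists T2, r2; split; [econstructor; eauto | exact Hk2].
  - intros HG; apply cfg_reaches_fail; exact HG.
  - intros [T [r [Hb Hk]]]; exists T, r; split; [|exact Hk].
    econstructor; eauto.
    intros y Hy; apply fresh_cfg_big, Hfresh, Hy.
Qed.

Lemma steps_cfg_reaches c1 c2 :
  steps c1 c2 -> cfg_reaches Df wf c2 -> cfg_reaches Df wf c1.
Proof.
  induction 1 as [|c1 c2 c3 Hs _ IH]; auto.
  intros H3; apply (step_cfg_reaches _ _ Hs), IH, H3.
Qed.

End Reaches.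

Theorem corollary4p6 (G D : heap) (e w : expr) :
  heap_finite G ->
  whnf w ->
  steps (G, CEval e, []) (D, CEval w, []) ->
  beval G [] e D w.
Proof.
  intros _ Hw Hs.
  assert (Hfinal : cfg_reaches D w (D, CEval w, [])).
  { apply cfg_reaches_whnf; [exact Hw | split; reflexivity]. }
  destruct (steps_cfg_reaches D w _ _ Hs Hfinal) as [D' [w' [Hb [-> ->]]]].
  exact Hb.
Qed.
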